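(* If $R$ is a strongly $*$-clean ring, then ${\rm psr}(R)=1$.
   Context: A $*$-ring is a ring with identity with an involution $*$. A projection is $p$ with $p^2=p=p^*$. $R$ is strongly $*$-clean if each element is the sum of a projection and a unit that commute with each other. ${\rm psr}(R)=1$ means: for any $a,b\in R$ with $aR+bR=R$ there is a projection $p$ such that $a+bp$ is a unit. *)

From mathcomp Require Import all_boot all_algebra.
Set Implicit Arguments. Unset Strict Implicit. Unset Printing Implicit Defensive.
Import GRing.Theory.
Local Open Scope ring_scope.

Definition is_involution (R : pzRingType) (s : R -> R) : Prop :=
  (forall x y : R, s (x + y) = s x + s y) /\
  (forall x y : R, s (x * y) = s y * s x) /\
  (forall x : R, s (s x) = x).

Definition is_unit (R : pzRingType) (u : R) : Prop :=
  exists v : R, u * v = 1 /\ v * u = 1.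

Definition is_projection (R : pzRingType) (s : R -> R) (p : R) : Prop :=
  p * p = p /\ s p = p.

Definition strongly_star_clean (R : pzRingType) (s : R -> R) : Prop :=
  forall a : R, exists p u : R,
    is_projection s p /\ is_unit u /\ a = p + u /\ p * u = u * p.

Definition psr_one (R : pzRingType) (s : R -> R) : Prop :=
  forall a b : R, (exists x y : R, a * x + b * y = 1) ->
    exists p : R, is_projection s p /\ is_unit (a + b * p).

(* In a strongly *-clean ring every idempotent [f = p + u] satisfies [f = 1 - p],
   hence is a projection; then [e + z] with [ez = z], [ze = 0] is a projection
   too, which forces [z = 0], so idempotents are central and one-sided inverses
   are two-sided.  Given [ax + by = 1], split [ax = e + u]: [a] is right
   invertible in the corner [(1 - e)R] and [b] in [eR], say [b b' = e].
   Splitting [-(a b') = e' + u'] and taking [p = e e'], [a + b p] is right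
   invertible on both corners, hence a unit. *)

From mathcomp Require Import all_boot all_algebra.
Set Implicit Arguments. Unset Strict Implicit. Unset Printing Implicit Defensive.
Import GRing.Theory.
Local Open Scope ring_scope.

Lemma unit_mul_eq0 (R : pzRingType) (u z : R) : is_unit u -> u * z = 0 -> z = 0.
Proof. by move=> [v [_ vu]] uz; rewrite -[z]mul1r -vu -mulrA uz mulr0. Qed.

Lemma idempotent_clean_complement (R : pzRingType) (f p u : R) :
  f * f = f -> p * p = p -> is_unit u -> f = p + u -> p * u = u * p -> f = 1 - p.
Proof.
move=> ff pp Uu fpu pu.
have uE : u = f - p by rewrite fpu addrC addKr.
have pf : p * f = f * p by rewrite fpu mulrDr mulrDl pp pu.
have fp0 : f * p = 0.
  by apply: (unit_mul_eq0 Uu); rewrite uE mulrBl !mulrA ff pf -mulrA pp subrr.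
have : 1 - f - p = 0.
  apply: (unit_mul_eq0 Uu); rewrite uE !mulrBr mulr1 !mulrBl ff pp fp0 pf fp0.
  by rewrite !subr0 sub0r opprK addrAC subrK subrr.
by move/subr0_eq => <-; rewrite opprB addrC subrK.
Qed.

Section Involution.

Variables (R : pzRingType) (s : R -> R).
Hypothesis invs : is_involution s.

Lemma involution1 : s 1 = 1.
Proof.
have [_ [sM sK]] := invs.
by rewrite -[s 1]mulr1 -{2}(sK 1) -sM mulr1 sK.
Qed.

Lemma involutionB (x y : R) : s (x - y) = s x - s y.
Proof. by have [sD _] := invs; apply: (addIr (s y)); rewrite -sD !subrK. Qed.

Lemma projection_mul (p q : R) :
  is_projection s p -> is_projection s q -> p * q = q * p -> is_projection s (p * q).
Proof.
move=> [pp sp] [qq sq] pq; have [_ [sM _]] := invs; split.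
  by rewrite mulrA -(mulrA p) -pq mulrA pp -mulrA qq.
by rewrite sM sp sq.
Qed.

End Involution.

Section StronglyStarClean.

Variables (R : pzRingType) (s : R -> R).
Hypotheses (invs : is_involution s) (clean : strongly_star_clean s).

Lemma idempotent_projection (f : R) : f * f = f -> s f = f.
Proof.
move=> ff; have [p [u [[pp sp] [Uu [fpu pu]]]]] := clean f.
have -> := idempotent_clean_complement ff pp Uu fpu pu.
by rewrite involutionB // involution1 // sp.
Qed.

Lemma idempotent_corner_eq0 (e z : R) : e * e = e -> e * z = z -> z * e = 0 -> z = 0.
Proof.
move=> ee ez ze; have [sD [sM _]] := invs.
have se := idempotent_projection ee.
have zz : z * z = 0 by rewrite -{2}ez mulrA ze mul0r.
have /idempotent_projection : (e + z) * (e + z) = e + z.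
  by rewrite mulrDl !mulrDr ee ez ze zz !addr0.
rewrite sD se => /addrI sz.
by rewrite -sz -ez sM sz se ze.
Qed.

Lemma idempotent_central (e x : R) : e * e = e -> e * x = x * e.
Proof.
move=> ee.
have ee' : (1 - e) * (1 - e) = 1 - e.
  by rewrite mulrBl mul1r mulrBr mulr1 ee subrr subr0.
have exe : e * x * (1 - e) = 0.
  apply: (idempotent_corner_eq0 ee); first by rewrite !mulrA ee.
  by rewrite -!mulrA mulrBl mul1r ee subrr !mulr0.
have xe : (1 - e) * x * e = 0.
  apply: (idempotent_corner_eq0 ee'); first by rewrite !mulrA ee'.
  by rewrite -!mulrA mulrBr mulr1 ee subrr !mulr0.
rewrite mulrBr mulr1 in exe; rewrite mulrBl mul1r mulrBl in xe.
by rewrite (subr0_eq exe) (subr0_eq xe).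
Qed.

Lemma rinv_unit (w r : R) : w * r = 1 -> is_unit w.
Proof.
move=> wr; exists r; split=> //.
have rw2 : r * w * (r * w) = r * w by rewrite mulrA -(mulrA r) wr mulr1.
have rw_w : (1 - r * w) * w = 0.
  by rewrite mulrBl mul1r (idempotent_central w rw2) mulrA wr mul1r subrr.
have : 1 - r * w = 0 by rewrite -[1 - _]mulr1 -{2}wr mulrA rw_w mul0r.
by move/subr0_eq.
Qed.

Lemma comaximal_corner_rinv (a b x y : R) : a * x + b * y = 1 ->
  exists e r b', [/\ is_projection s e, a * r = 1 - e, r * e = 0,
                     b * b' = e & b' * e = b'].
Proof.
move=> axby; have [e [u [[ee se] [[v [uv _]] [axE _]]]]] := clean (a * x).
have eC := idempotent_central _ ee.
have eK : e * (1 - e) = 0 by rewrite mulrBr mulr1 ee subrr.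
have byE : b * y = 1 - e - u.
  by rewrite -addrA -opprD -axE -axby addrC addKr.
exists e, (x * v * (1 - e)), (- (y * v * e)); split=> //.
- by rewrite !mulrA axE mulrDl uv mulrDl (eC v) -mulrA eK mulr0 add0r mul1r.
- by rewrite -mulrA mulrBl mul1r ee subrr mulr0.
- rewrite mulrN !mulrA byE !mulrBl mul1r uv mul1r (eC v) -mulrA ee subrr.
  by rewrite sub0r opprK.
- by rewrite mulNr -mulrA ee.
Qed.

Lemma strongly_star_clean_psr_one : psr_one s.
Proof.
move=> a b [x [y /comaximal_corner_rinv[e [r [b' [[ee se] ar re bb' b'e]]]]]].
have [e' [u' [[ee' se'] [[v' [uv' _]] [abE _]]]]] := clean (- (a * b')).
have e'C := idempotent_central _ ee'.
have Pp : is_projection s (e * e') by apply: projection_mul.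
have pC := idempotent_central _ Pp.1.
exists (e * e'); split=> //.
apply: (@rinv_unit _ (r - b' * v')).
have wr : (a + b * (e * e')) * r = 1 - e.
  by rewrite mulrDl ar -mulrA pC (mulrA r) re mul0r mulr0 addr0.
have wb' : (a + b * (e * e')) * b' = - (u' * e).
  rewrite mulrDl -mulrA pC mulrA bb' mulrA ee -{1}b'e mulrA.
  by rewrite -[a * b']opprK abE mulNr mulrDl (e'C e) opprD addrAC addNr add0r.
rewrite mulrBr wr mulrA wb' mulNr opprK.
by rewrite -mulrA (idempotent_central v' ee) mulrA uv' mul1r subrK.
Qed.

End StronglyStarClean.

Theorem corollary4p6 (R : pzRingType) (s : R -> R) :
  is_involution s -> strongly_star_clean s -> psr_one s.
Proof. exact: strongly_star_clean_psr_one. Qed.
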